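(* Let $\tilde L$ be a minimum-size counterexample. Then every join-irreducible element $j$ of $\tilde L$ satisfies $|{\uparrow}j|>\ell(\tilde L)$.
   Context: The length $\ell(L)$ of a finite lattice $L$ is one less than the maximum number of elements of a chain (totally ordered subset) in $L$. For a poset $P$, $x$ upper covers $y$ if $y<x$ with nothing strictly between; join-irreducible: upper covers exactly one element. For $x\in P$, ${\uparrow}x=\{y: x\le y\}$. A counterexample is a finite lattice $L$ with $|L|>1$ in which every join-irreducible $j$ satisfies $|{\uparrow}j|>|L|/2$; a minimum-size counterexample is a counterexample $\tilde L$ such that no counterexample has fewer elements. *)

From HB Require Import structures.
From mathcomp Require Import all_boot all_order.
Set Implicit Arguments. Unset Strict Implicit. Unset Printing Implicit Defensive.
Import Order.Theory.
Local Open Scope order_scope.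

Definition covers {d} {T : finPOrderType d} (x y : T) : bool :=
  (y < x) && [forall z : T, ~~ ((y < z) && (z < x))].

Definition join_irreducible {d} {T : finPOrderType d} (j : T) : bool :=
  #|[set y : T | covers j y]| == 1%N.

Definition upset {d} {T : finPOrderType d} (x : T) : {set T} :=
  [set y : T | x <= y].

Definition is_chain {d} {T : finPOrderType d} (S : {set T}) : bool :=
  [forall x in S, forall y in S, (x <= y) || (y <= x)].

Definition lattice_length {d} {T : finPOrderType d} : nat :=
  (\max_(S : {set T} | is_chain S) #|S|).-1.

Definition counterexample {d} (T : finLatticeType d) : Prop :=
  (1 < #|T|)%N /\
  forall j : T, join_irreducible j -> (#|T| < 2 * #|upset j|)%N.

Definition min_counterexample {d} (T : finLatticeType d) : Prop :=
  counterexample T /\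
  forall d' (T' : finLatticeType d'), counterexample T' -> (#|T| <= #|T'|)%N.

From HB Require Import structures.
From mathcomp Require Import all_boot all_order zify.
Import Order.Theory.
Local Open Scope order_scope.

(* Take a longest chain [S] with top [m] and second-largest element [c], and
   let [k] be minimal among the elements not below [c].  All elements strictly
   below [k] lie below [c], so the join of two lower covers of [k] is below [c]
   and hence differs from [k]: [k] is join-irreducible.  Moreover [upset k]
   misses [S :\ m], so [#|upset k| <= #|L| - ℓ(L)].  As [k] and [j] both have
   up-sets of more than half of [L], this forces [ℓ(L) < #|upset j|]. *)

Section FinPOrder.
Context {d : Order.disp_t} {T : finPOrderType d}.

Definition downset (x : T) : {set T} := [set y : T | y <= x].

Lemma downset_lt_card (x y : T) : x < y -> (#|downset x| < #|downset y|)%N.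
Proof.
move=> xy; apply/proper_card/properP; split.
  by apply/subsetP => z; rewrite !inE => /le_trans; apply; apply: ltW.
by exists y; rewrite !inE ?lexx // lt_geF.
Qed.

Lemma exists_maximal {P : pred T} {x0 : T} :
  P x0 -> exists2 m, P m & forall y, P y -> ~~ (m < y).
Proof.
move=> Px0; have [m Pm mmax] := arg_maxnP (fun x => #|downset x|) Px0.
exists m => // y Py; apply/negP => /downset_lt_card.
by rewrite ltnNge => /negP; apply; apply: mmax.
Qed.

Lemma exists_minimal {P : pred T} {x0 : T} :
  P x0 -> exists2 m, P m & forall y, P y -> ~~ (y < m).
Proof.
move=> Px0; have [m Pm mmin] := arg_minnP (fun x => #|downset x|) Px0.
exists m => // y Py; apply/negP => /downset_lt_card.
by rewrite ltnNge => /negP; apply; apply: mmin.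
Qed.

Lemma is_chainP (S : {set T}) :
  reflect {in S &, forall x y, (x <= y) || (y <= x)} (is_chain S).
Proof.
apply: (iffP forallP) => [chS x y xS yS | chS x].
  by have /implyP/(_ xS)/forallP/(_ y)/implyP := chS x; apply.
by apply/implyP => xS; apply/forall_inP => y yS; apply: chS.
Qed.

Lemma is_chainS {S S' : {set T}} : S' \subset S -> is_chain S -> is_chain S'.
Proof.
move=> /subsetP S'S /is_chainP chS; apply/is_chainP => x y xS' yS'.
exact: chS (S'S x xS') (S'S y yS').
Qed.

Lemma chain_max {S : {set T}} {x0 : T} :
  is_chain S -> x0 \in S -> exists2 m, m \in S & {in S, forall s, s <= m}.
Proof.
move=> /is_chainP chS x0S; have [m mS mmax] := exists_maximal x0S.
exists m => // s sS; have /orP[ms | //] := chS _ _ mS sS.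
by have := mmax s sS; rewrite lt_neqAle ms andbT negbK => /eqP ->.
Qed.

Lemma chain_top_downset {S : {set T}} : is_chain S -> (1 < #|S|)%N ->
  exists m c, [/\ ~~ (m <= c), m \in S & S :\ m \subset downset c].
Proof.
move=> chS S_gt1; have [x0 x0S] : exists x, x \in S.
  by apply/set0Pn; rewrite -card_gt0 ltnW.
have [m mS mtop] := chain_max chS x0S.
have [x1 x1S] : exists x, x \in S :\ m.
  by apply/set0Pn; rewrite -card_gt0; move: S_gt1; rewrite (cardsD1 m S) mS.
have [c cSm ctop] := chain_max (is_chainS (subsetDl S [set m]) chS) x1S.
move: (cSm); rewrite !inE => /andP[cm cS].
exists m, c; split => //; last by apply/subsetP => s /ctop; rewrite inE.
by rewrite lt_geF // lt_neqAle cm mtop.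
Qed.

Lemma card_upset_downset {k c : T} :
  ~~ (k <= c) -> (#|upset k| + #|downset c| <= #|T|)%N.
Proof.
move=> kc; rewrite -(cardsC (downset c)) addnC leq_add2l subset_leq_card //.
apply/subsetP => y; rewrite !inE; apply: contraL => yc.
by apply: contra kc => /le_trans; apply.
Qed.

Lemma lattice_length_chain :
  exists2 S : {set T}, is_chain S & @lattice_length _ T = #|S|.-1.
Proof.
have some_chain : (0 < #|[pred S : {set T} | is_chain S]|)%N.
  by apply/card_gt0P; exists set0; apply/is_chainP => x; rewrite inE.
have [S chS maxS] := eq_bigmax_cond (fun S : {set T} => #|S|) some_chain.
by exists S => //; rewrite /lattice_length; congr _.-1; exact: maxS.
Qed.

End FinPOrder.

Section FinLattice.
Context {d : Order.disp_t} {T : finLatticeType d}.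

Lemma minimal_not_below_join_irreducible (c k : T) :
  ~~ (k <= c) -> (forall y, y < k -> y <= c) -> join_irreducible k.
Proof.
move=> kc below_k.
have ck : c `&` k < k.
  by rewrite lt_leAnge leIr /=; apply: contra kc => /le_trans; apply; apply: leIl.
have cover_between (y z : T) : covers k y -> y <= z -> z < k -> z = y.
  move=> /andP[_ /forallP ycov] yz zk; apply/eqP; rewrite eq_le yz andbT.
  by have := ycov z; rewrite zk andbT lt_neqAle yz andbT negbK => /eqP->.
have join_lt (y z : T) : y < k -> z < k -> y `|` z < k.
  move=> yk zk; rewrite lt_leAnge leUx (ltW yk) (ltW zk) /=.
  by apply: contra kc => /le_trans; apply; rewrite leUx !below_k.
have [y0 y0k y0max] := exists_maximal (P := fun y => y < k) ck.
have covy0 : covers k y0.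
  rewrite /covers y0k /=; apply/forallP => z; apply/negP => /andP[y0z zk].
  by have := y0max z zk; rewrite y0z.
rewrite /join_irreducible (_ : [set y | covers k y] = [set y0]) ?cards1 //.
apply/setP => y; rewrite !inE.
apply/idP/eqP => [covy | -> //].
have yk : y < k by case/andP: covy.
have <- : y `|` y0 = y by apply: cover_between; rewrite ?leUl ?join_lt.
by apply: cover_between; rewrite ?leUr ?join_lt.
Qed.

Lemma exists_join_irreducible_not_below {c x : T} :
  ~~ (x <= c) -> exists2 k, join_irreducible k & ~~ (k <= c).
Proof.
move=> xc; have [k kc kmin] := exists_minimal (P := fun y => ~~ (y <= c)) xc.
exists k => //; apply: minimal_not_below_join_irreducible kc _ => y yk.
exact: contraTT (kmin y) yk.
Qed.

Lemma chain_join_irreducible_upset {S : {set T}} : is_chain S -> (1 < #|S|)%N ->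
  exists2 k : T, join_irreducible k & (#|upset k| + #|S| <= #|T| + 1)%N.
Proof.
move=> chS S_gt1; have [m [c [mc mS Sm_c]]] := chain_top_downset chS S_gt1.
have [k kji kc] := exists_join_irreducible_not_below mc.
exists k => //; have := card_upset_downset kc; have := subset_leq_card Sm_c.
rewrite (cardsD1 m S) mS add1n addnS addn1 ltnS => Sm_le up_le.
by apply: leq_trans up_le; rewrite leq_add2l.
Qed.

End FinLattice.

Theorem theorem2p7 (d : Order.disp_t) (L : finLatticeType d) :
  min_counterexample L ->
  forall j : L, join_irreducible j -> (@lattice_length _ L < #|upset j|)%N.
Proof.
move=> [[_ half_upset] _] j jji.
have [S chS ->] := @lattice_length_chain _ L.
have j_up : (0 < #|upset j|)%N by apply/card_gt0P; exists j; rewrite inE.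
have [S_le1 | S_gt1] := leqP #|S| 1.
  by apply: leq_ltn_trans j_up; rewrite -subn1 leq_subLR addn0.
have [k kji kS] := chain_join_irreducible_upset chS S_gt1.
have := half_upset k kji; have := half_upset j jji.
(* [#|S|] occurs through two convertible finType instances; [set] merges them
   into a single atom for [lia]. *)
by move: kS; set s := #|S|; lia.
Qed.
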